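(* Let $N\ge 2$ be an integer and $\tau>0$. For $t\in\{0,\tau,2\tau,\dots\}$ let $u_j^t=u(j,t)$, $j=0,\dots,N$, be defined by prescribed initial values $u(j,0)$, the Dirichlet boundary condition $u_0^t=u_N^t=0$ for all $t$ (in particular $u(0,0)=u(N,0)=0$), and the iteration, for $j=1,\dots,N-1$, $$u_j^{t+\tau}=u_j^t+\frac{u_j^tu_{j-1}^t}{2}\bigl(u_j^t+u_{j-1}^t-1\bigr)\bigl(u_{j-1}^t-u_j^t\bigr)+\frac{u_j^tu_{j+1}^t}{2}\bigl(u_j^t+u_{j+1}^t-1\bigr)\bigl(u_{j+1}^t-u_j^t\bigr).$$ Suppose $1/2\le u(j,0)\le 1$ for $j=1,\dots,N-1$. Then for every $j=1,\dots,N-1$, $$\lim_{t\to\infty}u(j,t)=\frac{1}{N-1}\sum_{i=1}^{N-1}u(i,0).$$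
   Context: Aggregation–diffusion lattice model on the grid points $x_j=j/N$ with time step $\tau$; the limit is taken along $t\in\{0,\tau,2\tau,\dots\}$. *)

From HB Require Import structures.
From mathcomp Require Import all_boot all_order all_algebra.
From mathcomp Require Import all_classical all_reals all_analysis.
Set Implicit Arguments. Unset Strict Implicit. Unset Printing Implicit Defensive.
Import Order.TTheory GRing.Theory Num.Theory.
Local Open Scope ring_scope.

Definition lattice_step {R : fieldType} (a b c : R) : R :=
  b + (b * a / 2%:R) * (b + a - 1) * (a - b)
    + (b * c / 2%:R) * (b + c - 1) * (c - b).

(* The update is in conservation form u_j' = u_j + F_j - F_(j-1), with flux
   F_j = c(u_j, u_(j+1)) (u_(j+1) - u_j) and conductance
   c(a, b) = a b (a + b - 1) / 2.  Hence the interior mass is conserved, and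
   since c maps [1/2, 1]^2 into [0, 1/2], each update is a convex combination
   of neighbouring values, so the interior stays in [1/2, 1].  The energy
   sum_j u_j^2 is a Lyapunov function: it drops by at least
   sum_k (u_(k+1) - u_k)^4 / 4 per step, because c(a, b) >= |b - a| / 8 and
   1 - 2 c(a, b) >= |b - a|.  So the increments tend to 0, all interior values
   merge, and their common limit is the conserved mean. *)

From mathcomp Require Import all_boot all_order all_algebra.
From mathcomp Require Import all_classical all_reals all_analysis.
From mathcomp Require Import ring lra zify.
Set Implicit Arguments. Unset Strict Implicit.
Import Order.TTheory GRing.Theory Num.Theory.
Import numFieldNormedType.Exports.
Local Open Scope classical_set_scope.
Local Open Scope ring_scope.

Section Conductance.
Variable R : realFieldType.
Implicit Types a b c : R.

Definition conductance a b := a * b * (a + b - 1) / 2%:R.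

Definition flux a b := conductance a b * (b - a).

Lemma lattice_stepE a b c : lattice_step a b c = b + flux b c - flux a b.
Proof. by rewrite /lattice_step /flux /conductance; field. Qed.

Lemma flux0l b : flux 0 b = 0.
Proof. by rewrite /flux /conductance !mul0r. Qed.

Lemma flux0r a : flux a 0 = 0.
Proof. by rewrite /flux /conductance mulr0 !mul0r. Qed.

Lemma fluxxx a : flux a a = 0.
Proof. by rewrite /flux subrr mulr0. Qed.

Lemma lattice_step0l b c : lattice_step 0 b c = lattice_step b b c.
Proof. by rewrite !lattice_stepE flux0l fluxxx. Qed.

Lemma lattice_step0r a b : lattice_step a b 0 = lattice_step a b b.
Proof. by rewrite !lattice_stepE flux0r fluxxx. Qed.

Lemma conductance_bounds a b : 1/2%:R <= a <= 1 -> 1/2%:R <= b <= 1 ->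
  0 <= conductance a b <= 1/2%:R.
Proof.
move=> /andP[a1 a2] /andP[b1 b2]; rewrite /conductance.
have ab0 : 0 <= a * b by nra.
have ab1 : a * b <= 1 by nra.
apply/andP; split; first by apply: divr_ge0 => //; nra.
have : a * b * (a + b - 1) <= 1 by nra.
lra.
Qed.

Lemma lattice_step_band a b c :
  1/2%:R <= a <= 1 -> 1/2%:R <= b <= 1 -> 1/2%:R <= c <= 1 ->
  1/2%:R <= lattice_step a b c <= 1.
Proof.
move=> ha hb hc.
have /andP[p0 p1] := conductance_bounds ha hb.
have /andP[q0 q1] := conductance_bounds hb hc.
have -> : lattice_step a b c =
    (1 - conductance a b - conductance b c) * b
    + conductance a b * a + conductance b c * c.
  by rewrite lattice_stepE /flux; ring.
move: ha hb hc => /andP[a1 a2] /andP[b1 b2] /andP[c1 c2].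
set p := conductance a b in p0 p1 *; set q := conductance b c in q0 q1 *.
have r0 : 0 <= 1 - p - q by lra.
apply/andP; split; nra.
Qed.

Lemma flux_dissipation a b : 1/2%:R <= a <= 1 -> 1/2%:R <= b <= 1 ->
  (b - a) ^+ 4 / 4%:R <= 2%:R * flux a b * (b - a) - 4%:R * flux a b ^+ 2.
Proof.
move=> ha hb; have /andP[D0 _] := conductance_bounds ha hb.
move: ha hb => /andP[a1 a2] /andP[b1 b2].
set D := conductance a b.
set g := `|b - a|.
have g0 : 0 <= g := normr_ge0 _.
have D_ge : g / 8%:R <= D.
  have gs : g <= a + b - 1 by rewrite /g ler_norml; apply/andP; split; lra.
  have : 1/4%:R * g <= a * b * (a + b - 1) by apply: ler_pM => //; nra.
  rewrite /D /conductance; lra.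
have D_le : g <= 1 - 2%:R * D.
  have hb' : b * (a + b - 1) <= 1 by nra.
  have ha' : a * (a + b - 1) <= 1 by nra.
  have : a * b * (a + b - 1) <= a by rewrite -mulrA; nra.
  have : a * b * (a + b - 1) <= b by rewrite mulrAC; nra.
  rewrite /D /conductance /g ler_norml => *; apply/andP; split; lra.
have DD : g / 8%:R * g <= D * (1 - 2%:R * D) by apply: ler_pM => //; lra.
have g2 : (b - a) ^+ 2 = g ^+ 2 by rewrite /g real_normK // num_real.
have -> : (b - a) ^+ 4 = g ^+ 2 * g ^+ 2 by rewrite -expr2 -g2 -exprM.
have -> : 2%:R * flux a b * (b - a) - 4%:R * flux a b ^+ 2 =
  2%:R * (D * (1 - 2%:R * D)) * g ^+ 2 by rewrite /flux -/D -g2; ring.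
have : 0 <= g ^+ 2 := sqr_ge0 _.
nra.
Qed.

End Conductance.

Section FluxUpdate.
Variables (R : realFieldType) (n : nat) (x F : nat -> R).
Hypotheses (F_first : F 0 = 0) (F_last : F n.-1 = 0).

Lemma sum_flux_update : \sum_(1 <= j < n) (x j + F j - F j.-1) = \sum_(1 <= j < n) x j.
Proof.
under eq_bigr do rewrite -addrA.
rewrite big_split /= -[RHS]addr0; congr (_ + _).
by rewrite big_add1 /= telescope_sumr // F_first F_last subrr.
Qed.

Lemma sum_sqr_flux_update_le :
  \sum_(1 <= j < n) (x j + F j - F j.-1) ^+ 2 <=
  \sum_(1 <= j < n) x j ^+ 2
    - \sum_(1 <= k < n.-1) (2%:R * F k * (x k.+1 - x k) - 4%:R * F k ^+ 2).
Proof.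
have site j : (x j + F j - F j.-1) ^+ 2 <=
    x j ^+ 2 + (2%:R * x j * F j + 2%:R * F j ^+ 2)
    - (2%:R * x j * F j.-1 - 2%:R * F j.-1 ^+ 2).
  have := sqr_ge0 (F j + F j.-1); nra.
apply: (le_trans (ler_sum_nat (fun j _ => site j))).
rewrite sumrB big_split /= -addrA lerD2l.
have -> : \sum_(1 <= j < n) (2%:R * x j * F j + 2%:R * F j ^+ 2) =
          \sum_(1 <= k < n.-1) (2%:R * x k * F k + 2%:R * F k ^+ 2).
  case: n F_last => [|[|m]] Fm; [by rewrite !big_geq.. |].
  by rewrite big_nat_recr //= Fm mulr0 expr0n /= mulr0 !addr0.
have -> : \sum_(1 <= j < n) (2%:R * x j * F j.-1 - 2%:R * F j.-1 ^+ 2) =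
          \sum_(1 <= k < n.-1) (2%:R * x k.+1 * F k - 2%:R * F k ^+ 2).
  rewrite big_add1 /=; have [->|n1] := posnP n.-1; first by rewrite !big_geq.
  by rewrite big_ltn // F_first mulr0 expr0n /= mulr0 subr0 add0r.
by rewrite -sumrB -sumrN; apply: ler_sum => k _; nra.
Qed.

End FluxUpdate.

Section Limits.
Variable R : realType.

Lemma lyapunov_decrement_cvg0 (E s : nat -> R) :
  (forall n, 0 <= E n) -> (forall n, 0 <= s n) ->
  (forall n, E n.+1 + s n <= E n) -> s n @[n --> \oo] --> 0.
Proof.
move=> E_ge0 s_ge0 E_decr; apply: cvg_series_cvg_0; apply: nondecreasing_is_cvgn.
  by apply/nondecreasing_seqP => n; rewrite /series /= big_nat_recr //= lerDl.
exists (E 0%N) => _ [n _ <-]; rewrite /series /=.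
have : \sum_(0 <= k < n) s k <= E 0%N - E n.
  elim: n => [|n IH]; first by rewrite big_geq // subrr.
  by rewrite big_nat_recr //=; have := E_decr n; lra.
by have := E_ge0 n; lra.
Qed.

Lemma cvgr0_exprn_le {T : Type} {F : set_system T} {FF : Filter F}
    (f s : T -> R) (m : nat) :
  (forall t, `|f t| ^+ m.+1 <= s t) -> s @ F --> 0 -> f @ F --> 0.
Proof.
move=> fs /cvgr0Pnorm_lt s0; apply/cvgr0Pnorm_lt => e e0.
near=> t.
have : `|f t| ^+ m.+1 < e ^+ m.+1.
  apply: (le_lt_trans (fs t)); apply: (le_lt_trans (ler_norm _)).
  by near: t; apply: s0; exact: exprn_gt0.
by rewrite ltr_pXn2r // nnegrE ltW.
Unshelve. all: by end_near. Qed.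

End Limits.

Section Scheme.
Variables (R : realType) (N : nat) (w : nat -> nat -> R).
Hypothesis N_ge2 : (2 <= N)%N.
Hypothesis w_boundary : forall n, w n 0 = 0 /\ w n N = 0.
Hypothesis w_step : forall n j, (1 <= j <= N.-1)%N ->
  w n.+1 j = lattice_step (w n j.-1) (w n j) (w n j.+1).
Hypothesis w_init : forall j, (1 <= j <= N.-1)%N -> 1/2%:R <= w 0 j <= 1.

Lemma w_band n j : (1 <= j <= N.-1)%N -> 1/2%:R <= w n j <= 1.
Proof.
elim: n j => [|n IH] j hj; first exact: w_init.
have neighbour k : (k <= N)%N -> w n k = 0 \/ 1/2%:R <= w n k <= 1.
  have [b0 bN] := w_boundary n.
  case: k => [|k] kN; first by left.
  have [->|kN'] := eqVneq k.+1 N; first by left.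
  by right; apply: IH; lia.
have hb := IH j hj.
rewrite w_step //.
have [->|ha] := neighbour j.-1 ltac:(lia); have [->|hc] := neighbour j.+1 ltac:(lia);
  rewrite ?lattice_step0l ?lattice_step0r; exact: lattice_step_band.
Qed.

Definition site_flux n k := flux (w n k) (w n k.+1).

Lemma site_flux_first n : site_flux n 0 = 0.
Proof. by rewrite /site_flux (proj1 (w_boundary n)) flux0l. Qed.

Lemma site_flux_last n : site_flux n N.-1 = 0.
Proof. by rewrite /site_flux prednK ?(proj2 (w_boundary n)) ?flux0r //; lia. Qed.

Lemma w_flux_form n j : (1 <= j < N)%N ->
  w n.+1 j = w n j + site_flux n j - site_flux n j.-1.
Proof. by move=> hj; rewrite w_step ?lattice_stepE /site_flux ?prednK //; lia. Qed.

Lemma mass_conserved n : \sum_(1 <= i < N) w n i = \sum_(1 <= i < N) w 0 i.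
Proof.
elim: n => // n <-.
rewrite -(sum_flux_update (w n) (site_flux_first n) (site_flux_last n)).
by apply: eq_big_nat => j hj; rewrite w_flux_form.
Qed.

Definition energy n := \sum_(1 <= i < N) w n i ^+ 2.

Definition dissipation n := \sum_(1 <= k < N.-1) (w n k.+1 - w n k) ^+ 4.

Lemma energy_decrement n : energy n.+1 + dissipation n / 4%:R <= energy n.
Proof.
have step : energy n.+1 =
    \sum_(1 <= j < N) (w n j + site_flux n j - site_flux n j.-1) ^+ 2.
  by apply: eq_big_nat => j hj; rewrite w_flux_form.
have diss : dissipation n / 4%:R <= \sum_(1 <= k < N.-1)
    (2%:R * site_flux n k * (w n k.+1 - w n k) - 4%:R * site_flux n k ^+ 2).
  rewrite /dissipation mulr_suml; apply: ler_sum_nat => k hk.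
  by apply: flux_dissipation; apply: w_band; lia.
have := sum_sqr_flux_update_le (w n) (site_flux_first n) (site_flux_last n).
rewrite -step -/(energy n); lra.
Qed.

Lemma dissipation_cvg0 : dissipation n @[n --> \oo] --> 0.
Proof.
apply: (@lyapunov_decrement_cvg0 _ (fun n => 4%:R * energy n)) => n.
- by apply: mulr_ge0 => //; apply: sumr_ge0 => i _; exact: sqr_ge0.
- by apply: sumr_ge0 => k _; exact: exprn_even_ge0.
- by have := energy_decrement n; lra.
Qed.

Lemma increment_cvg0 k : (1 <= k < N.-1)%N ->
  (w n k.+1 - w n k) @[n --> \oo] --> 0.
Proof.
move=> hk; apply: (cvgr0_exprn_le (m := 3) _ dissipation_cvg0) => n.
rewrite -normrX ger0_norm ?exprn_even_ge0 //.
rewrite /dissipation (bigD1_seq k) ?mem_index_iota ?iota_uniq //= lerDl.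
by apply: sumr_ge0 => i _; exact: exprn_even_ge0.
Qed.

Lemma w_sub_first_cvg0 i : (1 <= i <= N.-1)%N ->
  (w n i - w n 1%N) @[n --> \oo] --> 0.
Proof.
elim: i => [//|i IH] hi.
have [->|i_gt0] := posnP i.
  by under eq_cvg do rewrite subrr; exact: cvg_cst.
have -> : (fun n => w n i.+1 - w n 1%N) =
    (fun n => (w n i.+1 - w n i) + (w n i - w n 1%N)).
  by apply/funext => n; rewrite addrA subrK.
rewrite -[0]addr0; apply: cvgD; [apply: increment_cvg0 | apply: IH]; lia.
Qed.

Lemma w_cvg_mean j : (1 <= j <= N.-1)%N ->
  w n j @[n --> \oo] --> (\sum_(1 <= i < N) w 0 i) / (N.-1)%:R.
Proof.
move=> hj.
have spread : \sum_(1 <= i < N) (w n i - w n j) @[n --> \oo] --> 0.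
  suff : \sum_(i <- index_iota 1 N | i \in index_iota 1 N) (w n i - w n j)
      @[n --> \oo] --> \sum_(i <- index_iota 1 N | i \in index_iota 1 N) (0 : R).
    by rewrite big1_eq; under eq_cvg do rewrite -big_seq.
  apply: cvg_big => [|i]; first exact: add_continuous.
  rewrite mem_index_iota => hi.
  have -> : (fun n => w n i - w n j) =
      (fun n => (w n i - w n 1%N) - (w n j - w n 1%N)).
    by apply/funext => n; rewrite opprB addrA subrK.
  have hi' : (1 <= i <= N.-1)%N by lia.
  rewrite -(subrr (0 : R)); apply: cvgB; exact: w_sub_first_cvg0.
set M := \sum_(1 <= i < N) w 0 i.
have -> : (fun n => w n j) =
    (fun n => (M - \sum_(1 <= i < N) (w n i - w n j)) / (N.-1)%:R).
  apply/funext => n.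
  rewrite sumrB mass_conserved sumr_const_nat subn1 opprB addrC subrK.
  by rewrite -[w n j *+ _]mulr_natr mulfK // pnatr_eq0; lia.
apply: (cvgMr_tmp (f := fun n => M - _)); rewrite -[X in _ --> X]subr0.
exact: cvgB (cvg_cst _) spread.
Qed.

End Scheme.

Theorem theorem3p5 (R : realType) (N : nat) (tau : R) (u : R -> nat -> R) :
  (2 <= N)%N -> 0 < tau ->
  (* Dirichlet boundary condition at every time t = n tau *)
  (forall n : nat, u (n%:R * tau) 0%N = 0 /\ u (n%:R * tau) N = 0) ->
  (* the iteration at interior sites *)
  (forall (n j : nat), (1 <= j <= N.-1)%N ->
     u (n.+1%:R * tau) j =
     lattice_step (u (n%:R * tau) j.-1) (u (n%:R * tau) j) (u (n%:R * tau) j.+1)) ->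
  (* initial data *)
  (forall j : nat, (1 <= j <= N.-1)%N -> 1 / 2%:R <= u 0 j <= 1) ->
  forall j : nat, (1 <= j <= N.-1)%N ->
    u (n%:R * tau) j @[n --> \oo] -->
      ((\sum_(1 <= i < N) u 0 i) / (N.-1)%:R : R).
Proof.
move=> N_ge2 _ boundary step init.
have init0 j : (1 <= j <= N.-1)%N -> 1/2%:R <= u (0%:R * tau) j <= 1.
  by rewrite mul0r; exact: init.
have := w_cvg_mean N_ge2 boundary step init0.
by under eq_bigr do rewrite mul0r.
Qed.
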